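(* Let $\Phi:\ell^\infty(\mathbb Z)\to\ell^\infty(\mathbb Z)$ be a bounded linear map commuting with the backward shift $B$, $(Bv)_n=v_{n+1}$. Let $\phi_0(v)=\Phi(v)_0$ be its $0$-th coordinate functional (so that $\Phi(v)_n=\phi_0(B^nv)$ for all $n$), and decompose $\phi_0=\phi^{ac}+\phi^{s}$, where $\phi^{ac}$ is weak*-continuous (i.e. $\phi^{ac}(v)=\sum_n a_nv_n$ for some $a\in\ell^1(\mathbb Z)$) and $\phi^{s}$ is singular (i.e. $\phi^s$ vanishes on $c_0(\mathbb Z)$). Define $\Phi^{ac}(v)=(\phi^{ac}(B^nv))_{n\in\mathbb Z}$ and $\Phi^{s}(v)=(\phi^{s}(B^nv))_{n\in\mathbb Z}$. Then $\Phi^{ac}$ and $\Phi^s$ both commute with $B$, $\Phi^{ac}$ is weak*-continuous, $\Phi^{ac}(c_0(\mathbb Z))\subseteq c_0(\mathbb Z)$, $\Phi^{s}(c_0(\mathbb Z))=0$, and $\Phi=\Phi^{ac}+\Phi^{s}$. Moreover this is the unique decomposition of $\Phi$ as a sum of a weak*-continuous map and a singular map (a map annihilating $c_0(\mathbb Z)$).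
   Context: $c_0(\mathbb Z)\subseteq\ell^\infty(\mathbb Z)$ denotes the sequences tending to $0$ at $\pm\infty$. A linear map on $\ell^\infty(\mathbb Z)$ is called $\mathbb Z$-equivariant if it commutes with the backward shift $B$. *)

From HB Require Import structures.
From mathcomp Require Import all_boot all_order all_algebra.
From mathcomp Require Import all_classical all_reals topology normedtype sequences.
Set Implicit Arguments. Unset Strict Implicit. Unset Printing Implicit Defensive.
Import Order.TTheory GRing.Theory Num.Theory.
Import numFieldNormedType.Exports.
Local Open Scope ring_scope.

Section Defs.
Variable R : realType.
Implicit Types (v a : int -> R) (T : (int -> R) -> (int -> R)).

Definition linf v : Prop := exists M : R, forall n, `|v n| <= M.

Definition c0 v : Prop :=
  forall e : R, 0 < e -> exists N : nat, forall n : int, (N < `|n|)%N -> `|v n| < e.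

(* a ∈ ℓ^1(Z); int is enumerated as Posz k (= k) and Negz k (= -(k+1)), k : nat *)
Definition l1 a : Prop :=
  cvgn (series (fun k : nat => `|a (Posz k)| + `|a (Negz k)|)).

Definition pairing a v : R :=
  limn (series (fun k : nat => a (Posz k) * v (Posz k) + a (Negz k) * v (Negz k))).

Definition bshift v : int -> R := fun n => v (n + 1).
Definition bshiftn (m : int) v : int -> R := fun n => v (n + m).

Definition linear_on T : Prop :=
  forall u v (c : R), linf u -> linf v ->
    forall n, T (fun k => c * u k + v k) n = c * T u n + T v n.

Definition bounded_op T : Prop :=
  exists C : R, forall v (M : R), (forall n, `|v n| <= M) -> forall n, `|T v n| <= C * M.

Definition Z_equivariant T : Prop :=
  forall v, linf v -> forall n, T (bshift v) n = bshift (T v) n.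

(* weak*-continuous map ℓ^∞ -> ℓ^∞ (ℓ^∞ = dual of ℓ^1): it maps ℓ^∞ into ℓ^∞ and
   composing it with any weak*-continuous functional <b,.> (b ∈ ℓ^1) gives a
   weak*-continuous functional <c,.> (c ∈ ℓ^1). *)
Definition wstar_continuous T : Prop :=
  (forall v, linf v -> linf (T v)) /\
  forall b, l1 b -> exists c, l1 c /\ forall v, linf v -> pairing b (T v) = pairing c v.

Definition singular_map T : Prop := forall v, c0 v -> forall n, T v n = 0.

End Defs.

(* Equivariance reduces everything to the coordinate 0:
   Phi v n = Phi (B^n v) 0 = <a, B^n v> + phis (B^n v), which is the decomposition.
   Weak*-continuity of v |-> <a, B^n v> comes from a representation lemma: a bounded
   linear functional on l^oo that is continuous along the truncations of v to the
   windows [-j, j) is the pairing with the l^1 sequence of its values on unit vectors;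
   dominated convergence for the pairing supplies that continuity.  For uniqueness,
   a weak*-continuous map is determined by its values on c_0, and on c_0 any
   decomposition of Phi into a weak*-continuous and a singular part reduces to Phi. *)

From HB Require Import structures.
From mathcomp Require Import all_boot all_order all_algebra.
From mathcomp Require Import all_classical all_reals topology normedtype sequences.
From mathcomp Require Import ring zify.
Import Order.TTheory GRing.Theory Num.Theory.
Import numFieldNormedType.Exports.
Local Open Scope classical_set_scope.
Local Open Scope ring_scope.
Set Implicit Arguments. Unset Strict Implicit. Unset Printing Implicit Defensive.

Section Pairing.
Variable R : realType.
Implicit Types (a v w : int -> R) (M : R).

Definition bounded_by M v := forall k, `|v k| <= M.

Definition pairing_partial a v :=
  series (fun k : nat => a (Posz k) * v (Posz k) + a (Negz k) * v (Negz k)).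
Definition l1_partial a := series (fun k : nat => `|a (Posz k)| + `|a (Negz k)|).
Definition l1_norm a := limn (l1_partial a).

Lemma bounded_by_ge0 M v : bounded_by M v -> 0 <= M.
Proof. by move=> vM; apply: le_trans (vM 0). Qed.

Lemma l1_partial_nondecreasing a : nondecreasing_seq (l1_partial a).
Proof. by apply: nondecreasing_series => n _ _; rewrite addr_ge0. Qed.

Lemma l1_partial_le_norm a j : l1 a -> l1_partial a j <= l1_norm a.
Proof. by move=> la; apply: nondecreasing_cvgn_le => //; exact: l1_partial_nondecreasing. Qed.

Lemma pairing_term_le a v M k : bounded_by M v ->
  `|a (Posz k) * v (Posz k) + a (Negz k) * v (Negz k)|
    <= M * (`|a (Posz k)| + `|a (Negz k)|).
Proof.
move=> vM; apply: le_trans (ler_normD _ _) _.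
by rewrite mulrDr lerD // normrM mulrC ler_wpM2r.
Qed.

Lemma is_cvg_pairing_partial a v M : l1 a -> bounded_by M v -> cvgn (pairing_partial a v).
Proof.
move=> la vM; apply: normed_cvg.
apply: (series_le_cvg (v_ := M *: (fun k : nat => `|a (Posz k)| + `|a (Negz k)|))).
- by move=> n; exact: normr_ge0.
- by move=> n; rewrite mulr_ge0 ?addr_ge0 // (bounded_by_ge0 vM).
- by move=> n; exact: pairing_term_le.
- exact: is_cvg_seriesZ.
Qed.

Lemma pairing_partial_cvg a v M : l1 a -> bounded_by M v ->
  pairing_partial a v @ \oo --> pairing a v.
Proof. by move=> la vM; exact: is_cvg_pairing_partial la vM. Qed.

Lemma pairing_tail_le a v M K : l1 a -> bounded_by M v ->
  `|pairing a v - pairing_partial a v K| <= M * (l1_norm a - l1_partial a K).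
Proof.
move=> la vM; have M0 := bounded_by_ge0 vM.
apply: (cvgr_to_le (F := eventually)
  (f := fun j : nat => `|pairing_partial a v j - pairing_partial a v K|)).
  by apply: cvg_norm; apply: cvgB; [exact: pairing_partial_cvg la vM | exact: cvg_cst].
near=> j.
have Kj : (K <= j)%N by near: j; exact: nbhs_infty_ge.
rewrite /pairing_partial sub_series_geq //.
apply: le_trans (ler_norm_sum _ _ _) _.
apply: (@le_trans _ _ (M * (l1_partial a j - l1_partial a K))); last first.
  by rewrite ler_wpM2l // lerB // l1_partial_le_norm.
rewrite /l1_partial sub_series_geq // mulr_sumr; apply: ler_sum => i _.
exact: pairing_term_le.
Unshelve. all: by end_near. Qed.

Lemma norm_pairing_le a v M : l1 a -> bounded_by M v -> `|pairing a v| <= M * l1_norm a.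
Proof.
move=> la vM; have := pairing_tail_le 0 la vM.
by rewrite /pairing_partial /l1_partial /series /= !big_geq // !subr0.
Qed.

Lemma pairing0 a : pairing a (fun _ => 0) = 0.
Proof.
rewrite /pairing (_ : series _ = fun=> 0) ?lim_cst //.
by apply/funext => j; apply: big1 => i _; rewrite !mulr0 addr0.
Qed.

Lemma pairing_linear a u v (c Mu Mv : R) : l1 a -> bounded_by Mu u -> bounded_by Mv v ->
  pairing a (fun k => c * u k + v k) = c * pairing a u + pairing a v.
Proof.
move=> la uM vM.
have -> : pairing a (fun k => c * u k + v k) =
    limn (fun j => c * pairing_partial a u j + pairing_partial a v j).
  congr (limn _); apply/funext => j.
  rewrite /pairing_partial /series /= mulr_sumr -big_split /=.
  by apply: eq_bigr => i _; ring.
apply: cvg_lim => //; apply: cvgD; last exact: pairing_partial_cvg la vM.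
by apply: cvgM; [exact: cvg_cst | exact: pairing_partial_cvg la uM].
Qed.

Lemma pairing_partial_cvg0 a (u : nat -> int -> R) K :
  (forall k, (fun j => u j k) @ \oo --> 0) ->
  (fun j => pairing_partial a (u j) K) @ \oo --> 0.
Proof.
move=> u0; elim: K => [|K IH].
  rewrite (_ : (fun j => _) = fun=> 0); first exact: cvg_cst.
  by apply/funext => j; rewrite /pairing_partial /series /= big_geq.
rewrite (_ : (fun j => _) = fun j => pairing_partial a (u j) K +
    (a (Posz K) * u j (Posz K) + a (Negz K) * u j (Negz K))); last first.
  by apply/funext => j; rewrite /pairing_partial seriesSr.
rewrite -[X in _ --> X](addr0 0); apply: cvgD => //.
rewrite -[X in _ --> X](addr0 0); apply: cvgD.
  by rewrite -(mulr0 (a (Posz K))); apply: cvgM => //; exact: cvg_cst.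
by rewrite -(mulr0 (a (Negz K))); apply: cvgM => //; exact: cvg_cst.
Qed.

(* Past step K the terms contribute at most M times the l^1 tail of [a], while
   the first K terms tend to 0 termwise. *)
Lemma pairing_dominated_cvg0 a (u : nat -> int -> R) M : l1 a ->
  (forall j, bounded_by M (u j)) -> (forall k, (fun j => u j k) @ \oo --> 0) ->
  (fun j => pairing a (u j)) @ \oo --> 0.
Proof.
move=> la uM u0; apply/cvgrPdist_lt => e e0.
have e20 : 0 < e / 2 by rewrite divr_gt0.
have tail0 : (fun K => M * (l1_norm a - l1_partial a K)) @ \oo --> 0.
  rewrite -(mulr0 M) -(subrr (l1_norm a)).
  by apply: cvgM; [exact: cvg_cst | apply: cvgB; [exact: cvg_cst | exact: la]].
have [K _ HK] := cvgr0_norm_lt _ tail0 _ e20.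
have tailK := le_lt_trans (ler_norm _) (HK K (leqnn K)).
near=> j.
have headK : `|pairing_partial a (u j) K| < e / 2.
  by near: j; exact: cvgr0_norm_lt _ (pairing_partial_cvg0 a K u0) _ e20.
rewrite sub0r normrN -[pairing a (u j)](subrK (pairing_partial a (u j) K)).
apply: le_lt_trans (ler_normD _ _) _; rewrite [e]splitr ltrD //.
exact: le_lt_trans (pairing_tail_le K la (uM j)) tailK.
Unshelve. all: by end_near. Qed.

Lemma pairing_dominated_cvg a (u : nat -> int -> R) w M : l1 a ->
  (forall j, bounded_by M (u j)) -> bounded_by M w ->
  (forall k, (fun j => u j k) @ \oo --> w k) ->
  (fun j => pairing a (u j)) @ \oo --> pairing a w.
Proof.
move=> la uM wM uw.
pose d j k := -1 * w k + u j k.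
have dM j : bounded_by (M + M) (d j).
  move=> k; rewrite /d mulN1r; apply: le_trans (ler_normD _ _) _.
  by rewrite normrN; exact: lerD (wM k) (uM j k).
have d0 k : (fun j => d j k) @ \oo --> 0.
  by rewrite -(addNr (w k)) -mulN1r; apply: cvgD => //; exact: cvg_cst.
have dE j : pairing a (d j) = pairing a (u j) - pairing a w.
  by rewrite /d (pairing_linear _ la wM (uM j)) mulN1r addrC.
rewrite (_ : (fun j => _) = fun j => pairing a (d j) + pairing a w); last first.
  by apply/funext => j; rewrite dE subrK.
rewrite -[X in _ --> X]add0r; apply: cvgD; last exact: cvg_cst.
exact: pairing_dominated_cvg0 la dM d0.
Qed.

End Pairing.

(* The step of the series defining [l1] and [pairing] at which [k] is summed. *)
Definition series_index (k : int) : nat := match k with Posz i => i | Negz i => i end.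

Lemma absz_le_series_index (k : int) : (absz k <= (series_index k).+1)%N.
Proof. by case: k => i //=; rewrite leqnSn. Qed.

Section TruncationUnitVectors.
Variable R : realType.
Implicit Types (a v w : int -> R) (M : R).

Definition trunc (j : nat) v : int -> R :=
  fun k => if (series_index k < j)%N then v k else 0.

Definition unit_vec (m : int) : int -> R := fun k => if k == m then 1 else 0.

Lemma trunc_bounded v M j : bounded_by M v -> bounded_by M (trunc j v).
Proof.
move=> vM k; rewrite /trunc; case: ifP => _ //.
by rewrite normr0 (bounded_by_ge0 vM).
Qed.

Lemma trunc_cvg v k : (fun j => trunc j v k) @ \oo --> v k.
Proof.
apply: cvg_near_cst; near=> j; rewrite /trunc ifT //.
by near: j; exact: nbhs_infty_ge.
Unshelve. all: by end_near. Qed.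

Lemma c0_trunc v j : c0 (trunc j v).
Proof.
move=> e e0; exists j => k jk; rewrite /trunc ifF ?normr0 //.
by apply/negbTE; rewrite -leqNgt; have := absz_le_series_index k; lia.
Qed.

Lemma trunc0 v : trunc 0 v = fun=> 0.
Proof. by apply/funext => k; rewrite /trunc ltn0. Qed.

Lemma trunc_succ v j : trunc j.+1 v = fun k =>
  v (Posz j) * unit_vec (Posz j) k + (v (Negz j) * unit_vec (Negz j) k + trunc j v k).
Proof.
apply/funext => k; rewrite /trunc /unit_vec; case: k => i /=.
- have [->|ne] := eqVneq i j; first by rewrite ltnSn ltnn eqxx mulr1 mulr0 !addr0.
  by rewrite eqz_nat (negbTE ne) !mulr0 !add0r ltnS ltn_neqAle ne.
- have [->|ne] := eqVneq i j; first by rewrite ltnSn ltnn eqxx mulr1 mulr0 add0r addr0.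
  have -> : (Negz i == Negz j) = false by apply/eqP => -[ij]; move: ne; rewrite ij eqxx.
  by rewrite !mulr0 !add0r ltnS ltn_neqAle ne.
Qed.

Lemma bounded_unit_vec m : bounded_by 1 (unit_vec m).
Proof. by move=> k; rewrite /unit_vec; case: ifP; rewrite ?normr1 ?normr0. Qed.

Lemma pairing_term_unit_vec m w j :
  unit_vec m (Posz j) * w (Posz j) + unit_vec m (Negz j) * w (Negz j) =
  if series_index m == j then w m else 0.
Proof.
rewrite /unit_vec; case: m => p /=; have [->|ne] := eqVneq p j.
- by rewrite eqxx mul1r mul0r addr0.
- have -> : (Posz j == Posz p) = false by apply/eqP; case => /esym/eqP; rewrite (negbTE ne).
  by rewrite !mul0r addr0.
- by rewrite eqxx mul1r mul0r add0r.
- have -> : (Negz j == Negz p) = false by apply/eqP; case => /esym/eqP; rewrite (negbTE ne).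
  by rewrite !mul0r addr0.
Qed.

Lemma pairing_partial_unit_vec m w j :
  pairing_partial (unit_vec m) w j = if (series_index m < j)%N then w m else 0.
Proof.
elim: j => [|j IH]; first by rewrite /pairing_partial /series /= big_geq.
rewrite /pairing_partial seriesSr -/(pairing_partial _ _ _) IH pairing_term_unit_vec.
have [->|ne] := eqVneq (series_index m) j; first by rewrite ltnn ltnSn add0r.
by rewrite addr0 [in RHS]ltnS [in RHS]leq_eqVlt (negbTE ne).
Qed.

Lemma pairing_partial_unit_vec_cvg m w : pairing_partial (unit_vec m) w @ \oo --> w m.
Proof.
apply: cvg_near_cst; near=> j; rewrite pairing_partial_unit_vec ifT //.
by near: j; exact: nbhs_infty_ge.
Unshelve. all: by end_near. Qed.

Lemma pairing_unit_vec m w : pairing (unit_vec m) w = w m.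
Proof. exact/cvg_lim/pairing_partial_unit_vec_cvg. Qed.

Lemma l1_unit_vec m : l1 (unit_vec m).
Proof.
rewrite /l1 -/(l1_partial _) (_ : l1_partial _ = pairing_partial (unit_vec m) (fun=> 1)).
  by apply: cvgP; exact: pairing_partial_unit_vec_cvg m (fun=> 1).
apply/funext => j; apply: eq_bigr => i _.
by rewrite /unit_vec; case: ifP; case: ifP; rewrite ?normr1 ?normr0 ?mulr1.
Qed.

Lemma pairing_trunc_cvg a v M : l1 a -> bounded_by M v ->
  (fun j => pairing a (trunc j v)) @ \oo --> pairing a v.
Proof.
move=> la vM; apply: (pairing_dominated_cvg (u := fun j => trunc j v) la _ vM).
  by move=> j; exact: trunc_bounded.
exact: trunc_cvg.
Qed.

End TruncationUnitVectors.

Section L1Representation.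
Variables (R : realType) (L : (int -> R) -> R) (C : R).
Hypothesis L_linear : forall (u v : int -> R) (c Mu Mv : R),
  bounded_by Mu u -> bounded_by Mv v -> L (fun k => c * u k + v k) = c * L u + L v.
Hypothesis L_bounded : forall (v : int -> R) (M : R), bounded_by M v -> `|L v| <= C * M.
Hypothesis L_trunc_cvg : forall (v : int -> R) (M : R),
  bounded_by M v -> (fun j => L (trunc j v)) @ \oo --> L v.

Let c : int -> R := fun m => L (unit_vec R m).

Lemma L_trunc (v : int -> R) (M : R) j :
  bounded_by M v -> L (trunc j v) = pairing_partial c v j.
Proof.
move=> vM; elim: j => [|j IH].
  have zero_bounded : bounded_by 0 (fun _ : int => 0 : R) by move=> k; rewrite normr0.
  have := L_bounded zero_bounded.
  rewrite trunc0 mulr0 normr_le0 => /eqP ->.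
  by rewrite /pairing_partial /series /= big_geq.
have tail_bounded : bounded_by (`|v (Negz j)| + M)
    (fun k => v (Negz j) * unit_vec R (Negz j) k + trunc j v k).
  move=> k; apply: le_trans (ler_normD _ _) _; apply: lerD; last exact: trunc_bounded.
  by rewrite normrM -[X in _ <= X]mulr1 ler_wpM2l // bounded_unit_vec.
rewrite trunc_succ (@L_linear _ _ _ _ _ (bounded_unit_vec _ _) tail_bounded).
rewrite (@L_linear _ _ _ _ _ (bounded_unit_vec _ _) (trunc_bounded j vM)) IH.
by rewrite /pairing_partial seriesSr /c; ring.
Qed.

(* Testing [L] against the signs of [c] bounds the partial sums of [|c|] by [C]. *)
Lemma l1_coefficients : l1 c.
Proof.
rewrite /l1 -/(l1_partial c).
apply: nondecreasing_is_cvgn; first exact: l1_partial_nondecreasing.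
pose s k := Num.sg (c k).
have sM : bounded_by 1 s by move=> k; rewrite /s normr_sg; case: (c k != 0).
exists C => _ [j _ <-].
have -> : l1_partial c j = pairing_partial c s j.
  apply: eq_bigr => i _.
  by rewrite /s !normrEsg [c (Posz i) * _]mulrC [c (Negz i) * _]mulrC.
rewrite -(L_trunc _ sM) -[C]mulr1; apply: le_trans (ler_norm _) _.
exact: L_bounded (trunc_bounded j sM).
Qed.

Lemma l1_representation :
  exists c, l1 c /\ forall (v : int -> R) (M : R), bounded_by M v -> L v = pairing c v.
Proof.
exists c; split=> [|v M vM]; first exact: l1_coefficients.
have := L_trunc_cvg vM; rewrite (funext (fun j => L_trunc j vM)).
by move/cvg_lim => <-.
Qed.

End L1Representation.

Section ShiftsAndC0.
Variable R : realType.
Implicit Types (v w : int -> R) (M : R) (T : (int -> R) -> (int -> R)).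

Definition shift_op (f : (int -> R) -> R) v (n : int) : R := f (bshiftn n v).

Lemma bounded_bshiftn v M n : bounded_by M v -> bounded_by M (bshiftn n v).
Proof. by move=> vM k; exact: vM. Qed.

Lemma linf_bshiftn v n : linf v -> linf (bshiftn n v).
Proof. by case=> M vM; exists M; exact: bounded_bshiftn. Qed.

Lemma c0_bshiftn v n : c0 v -> c0 (bshiftn n v).
Proof.
move=> cv e e0; have [N HN] := cv e e0; exists (N + absz n)%N => k Hk.
by apply: HN; lia.
Qed.

Lemma shift_op_equivariant f : Z_equivariant (shift_op f).
Proof.
move=> v _ n; rewrite /shift_op /bshift; congr f.
by apply/funext => k; rewrite /bshiftn; congr v; lia.
Qed.

Lemma equivariant_bshiftn_nat T : Z_equivariant T ->
  forall (m : nat) w, linf w -> forall k, T (bshiftn m w) k = T w (k + m%:Z).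
Proof.
move=> eqv; elim=> [|m IH] w lw k.
  have -> : bshiftn 0 w = w by apply/funext => i; rewrite /bshiftn addr0.
  by rewrite addr0.
have -> : bshiftn m.+1 w = bshift (bshiftn m w).
  by apply/funext => i; rewrite /bshift /bshiftn; congr w; lia.
rewrite eqv; last exact: linf_bshiftn.
by rewrite /bshift IH //; congr (T w _); lia.
Qed.

Lemma equivariant_coord T v : Z_equivariant T -> linf v ->
  forall n, T v n = T (bshiftn n v) 0.
Proof.
move=> eqv lv [m|m]; first by rewrite (equivariant_bshiftn_nat eqv) // add0r.
set w := bshiftn (Negz m) v.
have -> : v = bshiftn m.+1 w.
  by apply/funext => i; rewrite /w /bshiftn NegzE; congr v; lia.
rewrite (equivariant_bshiftn_nat eqv); last exact: linf_bshiftn.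
by congr (T _ _); rewrite NegzE; lia.
Qed.

Lemma c0_bounded v : c0 v -> exists M, bounded_by M v.
Proof.
move=> cv; have [N HN] := cv 1 ltr01.
pose S := \sum_(i < N.+1) (`|v (Posz i)| + `|v (Negz i)|).
have S0 : 0 <= S by apply: sumr_ge0 => i _; rewrite addr_ge0.
exists (1 + S) => k.
have [Nk|kN] := ltnP N (absz k).
  by apply: le_trans (ltW (HN k Nk)) _; rewrite lerDl.
have ik : (series_index k < N.+1)%N by case: k kN => i //= H; lia.
apply: le_trans _ (ler_wpDl ler01 (le_refl _)).
rewrite /S (bigD1 (Ordinal ik)) //=.
apply: le_trans (_ : _ <= `|v (Posz (series_index k))| + `|v (Negz (series_index k))|) _.
  by case: k {kN ik} => i /=; rewrite ?lerDl ?lerDr.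
by rewrite lerDl; apply: sumr_ge0 => i _; rewrite addr_ge0.
Qed.

Lemma c0_shift_cvg0 v k : c0 v ->
  (fun m : nat => v (k + m%:Z)) @ \oo --> 0 /\ (fun m : nat => v (k - m%:Z)) @ \oo --> 0.
Proof.
move=> cv; split; apply/cvgrPdist_lt => e e0; have [N HN] := cv e e0; near=> m;
  rewrite sub0r normrN; apply: HN;
  (have : ((N + absz k).+1 <= m)%N by near: m; exact: nbhs_infty_ge); lia.
Unshelve. all: by end_near. Qed.

Lemma c0_of_cvg0 w : (fun m : nat => w m%:Z) @ \oo --> 0 ->
  (fun m : nat => w (- m%:Z)) @ \oo --> 0 -> c0 w.
Proof.
move=> pos neg e e0.
have [N1 _ H1] := cvgr0_norm_lt _ pos e e0.
have [N2 _ H2] := cvgr0_norm_lt _ neg e e0.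
exists (N1 + N2)%N => -[m|m] Hn; first by apply: H1 => /=; move: Hn => /=; lia.
by rewrite NegzE; apply: (H2 m.+1) => /=; move: Hn => /=; lia.
Qed.

End ShiftsAndC0.

Section PairingOperator.
Variable R : realType.
Implicit Types (a v : int -> R) (M : R).

Lemma bounded_pairing_op a v M : l1 a -> bounded_by M v ->
  bounded_by (M * l1_norm a) (shift_op (pairing a) v).
Proof. by move=> la vM n; exact: norm_pairing_le la (bounded_bshiftn n vM). Qed.

Lemma pairing_op_linear a u v (c Mu Mv : R) : l1 a -> bounded_by Mu u -> bounded_by Mv v ->
  shift_op (pairing a) (fun k => c * u k + v k) =
  fun n => c * shift_op (pairing a) u n + shift_op (pairing a) v n.
Proof.
move=> la uM vM; apply/funext => n.
exact: pairing_linear la (bounded_bshiftn n uM) (bounded_bshiftn n vM).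
Qed.

Lemma pairing_op_trunc_cvg a v M n : l1 a -> bounded_by M v ->
  (fun j => shift_op (pairing a) (trunc j v) n) @ \oo --> shift_op (pairing a) v n.
Proof.
move=> la vM; apply: (pairing_dominated_cvg (u := fun j => bshiftn n (trunc j v)) la).
- by move=> j; apply: bounded_bshiftn; exact: trunc_bounded.
- exact: bounded_bshiftn.
- by move=> k; exact: trunc_cvg.
Qed.

Lemma wstar_continuous_pairing_op a : l1 a -> wstar_continuous (shift_op (pairing a)).
Proof.
move=> la; split=> [v [M vM]|b lb]; first by exists (M * l1_norm a); exact: bounded_pairing_op.
have [c [lc bc]] : exists c, l1 c /\ forall v M, bounded_by M v ->
    pairing b (shift_op (pairing a) v) = pairing c v.
  apply: (l1_representation (C := l1_norm a * l1_norm b)).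
- move=> u v c Mu Mv uM vM; rewrite (pairing_op_linear c la uM vM).
  exact: pairing_linear lb (bounded_pairing_op la uM) (bounded_pairing_op la vM).
- move=> v M vM; rewrite mulrAC [l1_norm a * M]mulrC.
  exact: norm_pairing_le lb (bounded_pairing_op la vM).
- move=> v M vM.
  apply: (pairing_dominated_cvg (u := fun j => shift_op (pairing a) (trunc j v)) lb).
  + by move=> j; apply: bounded_pairing_op la _; exact: trunc_bounded.
  + exact: bounded_pairing_op.
  + by move=> n; exact: pairing_op_trunc_cvg.
by exists c; split=> // v [M vM]; exact: bc vM.
Qed.

Lemma c0_pairing_op a v : l1 a -> c0 v -> c0 (shift_op (pairing a) v).
Proof.
move=> la cv; have [M vM] := c0_bounded cv.
have zero_bounded : bounded_by M (fun _ : int => 0 : R).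
  by move=> k; rewrite normr0 (bounded_by_ge0 vM).
apply: c0_of_cvg0; rewrite -(pairing0 a).
- apply: (pairing_dominated_cvg (u := fun m : nat => bshiftn m%:Z v) la _ zero_bounded).
    by move=> m; exact: bounded_bshiftn.
  by move=> k; exact: (c0_shift_cvg0 k cv).1.
- apply: (pairing_dominated_cvg (u := fun m : nat => bshiftn (- m%:Z) v) la _ zero_bounded).
    by move=> m; exact: bounded_bshiftn.
  by move=> k; exact: (c0_shift_cvg0 k cv).2.
Qed.

End PairingOperator.

(* Each coordinate of a weak*-continuous map is a pairing with an [l1] sequence, and
   pairings are continuous along truncations, which lie in [c0]. *)
Lemma wstar_continuous_eq_on_c0 (R : realType) (T1 T2 : (int -> R) -> (int -> R)) :
  wstar_continuous T1 -> wstar_continuous T2 ->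
  (forall u, linf u -> c0 u -> forall n, T1 u n = T2 u n) ->
  forall v, linf v -> forall n, T1 v n = T2 v n.
Proof.
move=> [_ w1] [_ w2] eq_c0 v [M vM] n.
have [c1 [lc1 e1]] := w1 _ (@l1_unit_vec R n).
have [c2 [lc2 e2]] := w2 _ (@l1_unit_vec R n).
have T1E u : linf u -> T1 u n = pairing c1 u by move=> lu; rewrite -e1 // pairing_unit_vec.
have T2E u : linf u -> T2 u n = pairing c2 u by move=> lu; rewrite -e2 // pairing_unit_vec.
have lt j : linf (trunc j v) by exists M; exact: trunc_bounded.
have trE : (fun j => pairing c1 (trunc j v)) = (fun j => pairing c2 (trunc j v)).
  by apply/funext => j; rewrite -T1E // -T2E // eq_c0 //; exact: c0_trunc.
have lv : linf v by exists M.
rewrite T1E // T2E // -(cvg_lim _ (pairing_trunc_cvg lc1 vM)) // trE.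
exact: cvg_lim (pairing_trunc_cvg lc2 vM).
Qed.

Theorem proposition2p1 (R : realType) (Phi : (int -> R) -> (int -> R))
  (a : int -> R) (phis : (int -> R) -> R) :
  linear_on Phi -> bounded_op Phi -> Z_equivariant Phi ->
  l1 a ->
  (forall v, linf v -> Phi v 0 = pairing a v + phis v) ->
  (forall v, c0 v -> phis v = 0) ->
  let Phiac := fun v (n : int) => pairing a (bshiftn n v) in
  let Phis := fun v (n : int) => phis (bshiftn n v) in
  Z_equivariant Phiac /\ Z_equivariant Phis /\
  wstar_continuous Phiac /\
  (forall v, c0 v -> c0 (Phiac v)) /\
  singular_map Phis /\
  (forall v, linf v -> forall n, Phi v n = Phiac v n + Phis v n) /\
  (forall Psi1 Psi2 : (int -> R) -> (int -> R),
        linear_on Psi1 -> linear_on Psi2 ->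
        wstar_continuous Psi1 -> singular_map Psi2 ->
        (forall v, linf v -> forall n, Phi v n = Psi1 v n + Psi2 v n) ->
        forall v, linf v -> forall n, Psi1 v n = Phiac v n /\ Psi2 v n = Phis v n).
Proof.
move=> _ _ eqv la phi0E phis_c0 Phiac Phis.
have PhiE v : linf v -> forall n, Phi v n = Phiac v n + Phis v n.
  by move=> lv n; rewrite (equivariant_coord eqv lv n) phi0E //; exact: linf_bshiftn.
have Phis_singular : singular_map Phis.
  by move=> v cv n; apply: phis_c0; exact: c0_bshiftn.
have Phiac_wstar : wstar_continuous Phiac by exact: wstar_continuous_pairing_op.
split; first exact: shift_op_equivariant.
split; first exact: shift_op_equivariant.
split; first exact: Phiac_wstar.
split; first by move=> v; exact: c0_pairing_op.
do 2 split=> //.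
move=> Psi1 Psi2 _ _ Psi1_wstar Psi2_singular PsiE v lv n.
have Psi1E : Psi1 v n = Phiac v n.
  apply: (wstar_continuous_eq_on_c0 Psi1_wstar Phiac_wstar) => // u lu cu m.
  by rewrite -[Psi1 u m]addr0 -(Psi2_singular u cu m) -PsiE // PhiE // Phis_singular ?addr0.
split=> //; apply: (@addrI _ (Phiac v n)).
by rewrite -PhiE // -Psi1E -PsiE.
Qed.
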